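(* Let $n\ge 1$ and let $I=(i_1,\ldots,i_r)$ be a composition of $n$. Then $$\sum_{\sigma\in\mathfrak S_n,\ \mathrm{SC}(\sigma)=I} q^{\binom{n}{2}-\mathrm{inv}(\sigma)} \;=\; q^{\mathrm{maj}(I)}\,\frac{[n]_q!}{[i_1]_q\,[i_1+i_2]_q\cdots[i_1+i_2+\cdots+i_r]_q},$$ where $\mathrm{maj}(I)=\sum_{j=1}^{r-1}(i_1+\cdots+i_j)$. (The right-hand side is the polynomial $c_I(q)$.)
   Context: Permutations $\sigma\in\mathfrak S_n$ are viewed as words $\sigma_1\sigma_2\cdots\sigma_n$. A word $a_1a_2\cdots a_m$ of integers is initially dominated if $a_1>a_j$ for all $2\le j\le m$. Every permutation has a unique factorization $\sigma=u_1u_2\cdots u_r$ into initially dominated words whose first (maximal) letters are increasing; the saillance composition of $\sigma$ is $\mathrm{SC}(\sigma)=(|u_1|,\ldots,|u_r|)$. $\mathrm{inv}(\sigma)$ is the number of inversions of $\sigma$, $[m]_q=1+q+\cdots+q^{m-1}$ and $[n]_q!=[1]_q[2]_q\cdots[n]_q$. *)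

From mathcomp Require Import all_boot all_order all_algebra all_fingroup.
Set Implicit Arguments. Unset Strict Implicit. Unset Printing Implicit Defensive.
Import GRing.Theory.
Local Open Scope ring_scope.

Definition perm_word n (s : 'S_n) : seq nat := [seq (val (s i)) | i <- enum 'I_n].

Definition is_composition (n : nat) (I : seq nat) : bool :=
  all (fun k => 0 < k)%N I && (sumn I == n).

Definition init_dominated (w : seq nat) : bool :=
  if w is a :: t then all (fun b => b < a)%N t else false.

Definition saillance_factorization (w : seq nat) (I : seq nat) : bool :=
  let us := reshape I w in
  [&& all (fun k => 0 < k)%N I, sumn I == size w, all init_dominated us
    & sorted ltn [seq head 0%N u | u <- us]].

(* SC(s) = I  (the factorization is unique, so this is equality with SC) *)
Definition SC_is n (s : 'S_n) (I : seq nat) : bool :=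
  saillance_factorization (perm_word s) I.

Definition inv_perm n (s : 'S_n) : nat :=
  #|[set p : 'I_n * 'I_n | (p.1 < p.2)%N && (s p.2 < s p.1)%N]|.

Definition qint (m : nat) : {poly rat} := \sum_(i < m) 'X^i.
Definition qfact (n : nat) : {poly rat} := \prod_(1 <= m < n.+1) qint m.

Definition partial_sums (I : seq nat) : seq nat :=
  [seq sumn (take k I) | k <- iota 1 (size I)].

Definition majI (I : seq nat) : nat := sumn (belast 0%N (partial_sums I)).

Definition cI (n : nat) (I : seq nat) : {poly rat} :=
  ('X^(majI I) * qfact n) %/ \prod_(k <- partial_sums I) qint k.

From mathcomp Require Import all_boot all_order all_algebra all_fingroup.
From mathcomp Require Import zify ring.

(* Every permutation of {0..n} arises exactly once from a permutation t of
   {0..n-1} and a letter a <= n, by shifting the letters >= a of t up by one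
   and appending a.  This adds the n - a inversions formed with the larger
   letters, so the co-inversion number grows by a.  If a = n the new letter is
   a new maximum and opens a factor of length 1 of the saillance
   factorization; otherwise it extends the last factor.  Hence the generating
   polynomial G_n(I) of co-inversions over SC^-1(I) satisfies
   G_{n+1}(I,1) = q^n G_n(I) and G_{n+1}(I,k+1) = [n]_q G_n(I,k), which is
   also the recursion satisfied by c_I(q). *)

Set Implicit Arguments.
Unset Strict Implicit.
Unset Printing Implicit Defensive.

Import GRing.Theory Num.Theory.

Lemma all_flatten (T : Type) (p : pred T) (ss : seq (seq T)) :
  all p (flatten ss) = all (all p) ss.
Proof. by elim: ss => //= s ss IH; rewrite all_cat IH. Qed.

Lemma init_dominated_all_ltn w y :
  init_dominated w -> all (fun z => z < y) w = (head 0 w < y).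
Proof.
case: w => //= a t /allP ta; apply/andb_idr => ay.
by apply/allP => b /ta ba; exact: ltn_trans ba ay.
Qed.

Lemma reshape_all_ltn I w y : size w <= sumn I ->
  all init_dominated (reshape I w) ->
  all (fun z => z < y) w = all (fun z => z < y) [seq head 0 u | u <- reshape I w].
Proof.
move=> hw hd; rewrite -{1}(reshapeKr hw) all_flatten all_map.
by apply: eq_in_all => u /(allP hd); exact: init_dominated_all_ltn.
Qed.

Lemma saillance_cat u v I k : sumn I = size u -> size v = k ->
  saillance_factorization (u ++ v) (rcons I k) =
  [&& saillance_factorization u I, init_dominated v
    & all (fun z => z < head 0 v) u].
Proof.
move=> hu hv; rewrite /saillance_factorization reshape_rcons; last first.
  by rewrite size_cat hu hv.
rewrite hu take_size_cat // drop_size_cat // sumn_rcons size_cat hu hv !eqxx.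
rewrite !all_rcons map_rcons !(sorted_pairwise ltn_trans) pairwise_rcons.
case hd: (all init_dominated _); last by rewrite !andbF.
rewrite -(reshape_all_ltn _ _ hd) ?hu //.
case: v hv => [|h t] <- /=; first by rewrite !andbF.
by case: (all _ I); case: (pairwise _ _); case: (all _ t); case: (all _ u).
Qed.

Lemma saillance_rcons1 w y I : sumn I = size w ->
  saillance_factorization (rcons w y) (rcons I 1) =
  saillance_factorization w I && all (fun z => z < y) w.
Proof. by move=> hw; rewrite -cats1 saillance_cat //= andbT. Qed.

Lemma saillance_rconsS w y I k : 0 < k -> sumn I + k = size w ->
  saillance_factorization (rcons w y) (rcons I k.+1) =
  saillance_factorization w (rcons I k) && has (fun z => y < z) w.
Proof.
move=> k_gt0 hw; have hu : sumn I = size (take (sumn I) w).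
  by rewrite size_takel // -hw leq_addr.
have hv : size (drop (sumn I) w) = k by rewrite size_drop -hw addKn.
rewrite -(cat_take_drop (sumn I) w) rcons_cat.
rewrite !saillance_cat ?size_rcons ?hv //.
case: (drop _ _) hv => [|h t] /= hv; first by rewrite -hv in k_gt0.
rewrite all_rcons; set u := take _ _.
case ht: (all _ t); last by rewrite !andbF.
case hu_h: (all _ u); last by rewrite !andbF.
have -> : has (fun z => y < z) (u ++ h :: t) = (y < h).
  apply/hasP/idP => [[z] | yh]; last by exists h; rewrite // mem_cat mem_head orbT.
  rewrite mem_cat inE => /or3P[/(allP hu_h) | /eqP-> // | /(allP ht)] zh yz;
    exact: ltn_trans yz zh.
by rewrite !andbT andbC.
Qed.

Lemma saillance_map_mono (f : nat -> nat) w I : {mono f : x y / x < y} ->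
  saillance_factorization (map f w) I = saillance_factorization w I.
Proof.
move=> mf; rewrite /saillance_factorization size_map -map_reshape all_map.
have -> : all (preim (map f) init_dominated) (reshape I w) =
          all init_dominated (reshape I w).
  apply: eq_all => -[|x t] //=.
  by rewrite all_map; apply: eq_all => z /=; rewrite mf.
case hd: (all init_dominated _); last by rewrite !andbF.
suff -> : [seq head 0 u | u <- map (map f) (reshape I w)] =
          map f [seq head 0 u | u <- reshape I w] by rewrite (mono_sorted mf).
by rewrite -!map_comp; apply/eq_in_map => u /(allP hd); case: u.
Qed.

Lemma ltn_bump_mono a : {mono bump a : x y / x < y}.
Proof. by move=> x y; rewrite !ltnNge leq_bump2. Qed.

Lemma size_perm_word n (s : 'S_n) : size (perm_word s) = n.
Proof. by rewrite size_map size_enum_ord. Qed.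

Lemma mem_perm_word n (s : 'S_n) x : (x \in perm_word s) = (x < n).
Proof.
apply/mapP/idP => [[i _ ->] | xn]; first exact: ltn_ord.
by exists ((s^-1)%g (Ordinal xn)); rewrite ?mem_enum // permKV.
Qed.

Lemma widen_ord_lift_max n (i : 'I_n) : widen_ord (leqnSn n) i = lift ord_max i.
Proof. by apply: val_inj; rewrite /= /bump leqNgt ltn_ord. Qed.

Lemma inv_permE n (s : 'S_n) :
  inv_perm s = \sum_(i < n) \sum_(j < n) ((i < j) && (s j < s i)).
Proof.
rewrite /inv_perm -sum1_card big_mkcond /= pair_bigA /=.
by apply: eq_bigr => -[i j] _; rewrite inE; case: ifP.
Qed.

Lemma sum_ord_geq n m : \sum_(k < n) (m <= k) = n - m.
Proof.
elim: n => [|n IH]; first by rewrite big_ord0.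
by rewrite big_ord_recr /= IH; case: leqP => /=; lia.
Qed.

Lemma inv_perm_le n (s : 'S_n) : inv_perm s <= 'C(n, 2).
Proof.
rewrite inv_permE -bin2_sum big_mkord [X in _ <= X](reindex_inj rev_ord_inj) /=.
apply: leq_sum => i _; rewrite /= -sum_ord_geq.
by apply: leq_sum => j _; case: (i < j) => //=; exact: leq_b1.
Qed.

Definition coinv n (s : 'S_n) := 'C(n, 2) - inv_perm s.

Section LiftPerm.

Variables (n : nat) (a : 'I_n.+1) (s : 'S_n).

Lemma perm_word_lift :
  perm_word (lift_perm ord_max a s) = rcons (map (bump a) (perm_word s)) a.
Proof.
rewrite /perm_word enum_ordSr map_rcons lift_perm_id -!map_comp.
by congr rcons; apply: eq_map => i /=; rewrite widen_ord_lift_max lift_perm_lift.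
Qed.

Lemma all_ltn_perm_word : all (fun x => x < a) (perm_word s) = (a == n :> nat).
Proof.
apply/allP/eqP => [lt_a | -> x]; last by rewrite mem_perm_word.
apply/eqP; rewrite eqn_leq -ltnS ltn_ord leqNgt; apply/negP => an.
by have := lt_a a; rewrite mem_perm_word ltnn => /(_ an).
Qed.

Lemma all_ltn_bump_perm_word :
  all (fun z => z < a) (map (bump a) (perm_word s)) = (a == n :> nat).
Proof.
rewrite all_map -all_ltn_perm_word; apply: eq_all => x /=.
by rewrite /bump; case: leqP => /=; lia.
Qed.

Lemma has_gtn_bump_perm_word :
  has (fun z => a < z) (map (bump a) (perm_word s)) = (a != n :> nat).
Proof.
rewrite has_map -all_ltn_perm_word -has_predC; apply: eq_has => x /=.
by rewrite /bump; case: leqP => /=; lia.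
Qed.

Lemma SC_lift1 I : sumn I = n ->
  SC_is (lift_perm ord_max a s) (rcons I 1) = (a == n :> nat) && SC_is s I.
Proof.
move=> hI; rewrite /SC_is perm_word_lift saillance_rcons1; last first.
  by rewrite size_map size_perm_word.
by rewrite all_ltn_bump_perm_word andbC saillance_map_mono //; exact: ltn_bump_mono.
Qed.

Lemma SC_liftS I k : 0 < k -> sumn I + k = n ->
  SC_is (lift_perm ord_max a s) (rcons I k.+1) =
  (a != n :> nat) && SC_is s (rcons I k).
Proof.
move=> k_gt0 hI; rewrite /SC_is perm_word_lift saillance_rconsS //; last first.
  by rewrite size_map size_perm_word.
by rewrite has_gtn_bump_perm_word andbC saillance_map_mono //; exact: ltn_bump_mono.
Qed.

Lemma inv_perm_lift : inv_perm (lift_perm ord_max a s) = inv_perm s + (n - a).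
Proof.
rewrite !inv_permE big_ord_recr /= [X in _ + X]big1 ?addn0; last first.
  by move=> j _; rewrite ltnNge -ltnS ltn_ord.
under eq_bigr => i _ do rewrite big_ord_recr /=.
rewrite big_split /=; congr (_ + _).
  apply: eq_bigr => i _; apply: eq_bigr => j _.
  by rewrite !widen_ord_lift_max !lift_perm_lift /= ltn_bump_mono.
rewrite -(sum_ord_geq n a) [RHS](reindex_inj (@perm_inj _ s)).
apply: eq_bigr => i _; rewrite widen_ord_lift_max lift_perm_lift lift_perm_id /=.
by rewrite ltn_ord /bump; case: (leqP a (s i)) => /=; lia.
Qed.

Lemma coinv_lift : coinv (lift_perm ord_max a s) = coinv s + a.
Proof.
rewrite /coinv inv_perm_lift binS bin1.
by have := inv_perm_le s; have := ltn_ord a; lia.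
Qed.

End LiftPerm.

Lemma big_lift_perm (R : Type) (idx : R) (op : Monoid.com_law idx) n
    (P : pred 'S_n.+1) (F : 'S_n.+1 -> R) :
  \big[op/idx]_(s | P s) F s =
  \big[op/idx]_(a : 'I_n.+1) \big[op/idx]_(t : 'S_n | P (lift_perm ord_max a t))
     F (lift_perm ord_max a t).
Proof.
pose lift_pair (p : 'I_n.+1 * 'S_n) := lift_perm ord_max p.1 p.2.
have lift_pair_inj : injective lift_pair.
  move=> [a1 t1] [a2 t2] /= eq_lift.
  have ea : a1 = a2 by move/(congr1 (fun u : 'S_n.+1 => u ord_max)): eq_lift;
    rewrite /lift_pair /= !lift_perm_id.
  subst a2; congr pair; apply/permP => i; apply: (@lift_inj _ a1).
  by rewrite -!(lift_perm_lift ord_max) -/(lift_pair (a1, _)) eq_lift.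
have lift_pair_bij : bijective lift_pair.
  by apply: inj_card_bij => //; rewrite card_prod card_ord !card_Sn factS.
by rewrite (reindex lift_pair) ?pair_big_dep //; exact: onW_bij.
Qed.

Local Open Scope ring_scope.

Definition SC_gen n I : {poly rat} := \sum_(s : 'S_n | SC_is s I) 'X^(coinv s).

Lemma SC_gen_nil : SC_gen 0 [::] = 1.
Proof.
rewrite /SC_gen (eq_bigl xpredT) ?sumr_const ?card_Sn // => s.
by rewrite /SC_is; case: (perm_word s) (size_perm_word s).
Qed.

Lemma SC_gen_rcons1 n I : sumn I = n ->
  SC_gen n.+1 (rcons I 1) = 'X^n * SC_gen n I.
Proof.
move=> hI; rewrite /SC_gen big_lift_perm big_ord_recr /= big1 ?add0r; last first.
  by move=> a _; apply: big_pred0 => t; rewrite SC_lift1 // (ltn_eqF (ltn_ord a)).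
under eq_bigl => t do rewrite SC_lift1 // eqxx.
by rewrite mulr_sumr; apply: eq_bigr => t _; rewrite coinv_lift exprD mulrC.
Qed.

Lemma SC_gen_rconsS n I k : (0 < k)%N -> (sumn I + k = n)%N ->
  SC_gen n.+1 (rcons I k.+1) = qint n * SC_gen n (rcons I k).
Proof.
move=> k_gt0 hI; rewrite /SC_gen big_lift_perm big_ord_recr /=.
rewrite [X in _ + X]big_pred0 ?addr0 => [|t]; last by rewrite SC_liftS // eqxx.
rewrite /qint mulr_suml; apply: eq_bigr => a _.
under eq_bigl => t do rewrite SC_liftS // (ltn_eqF (ltn_ord a)).
by rewrite mulr_sumr; apply: eq_bigr => t _; rewrite coinv_lift exprD mulrC.
Qed.

Definition cI_denom I : {poly rat} := \prod_(k <- partial_sums I) qint k.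

Lemma partial_sums_rcons I x :
  partial_sums (rcons I x) = rcons (partial_sums I) (sumn I + x)%N.
Proof.
rewrite /partial_sums size_rcons -(addn1 (size I)) iotaD map_cat cats1 /=.
congr rcons; last by rewrite take_oversize ?sumn_rcons // size_rcons add1n.
apply/eq_in_map => k; rewrite mem_iota add1n ltnS => /andP [_ hk].
by rewrite -cats1 takel_cat.
Qed.

Lemma majI_rcons I x : majI (rcons I x) = sumn (partial_sums I).
Proof. by rewrite /majI partial_sums_rcons belast_rcons. Qed.

Lemma sumn_partial_sums I : sumn (partial_sums I) = (majI I + sumn I)%N.
Proof.
by case/lastP: I => // I x; rewrite partial_sums_rcons majI_rcons !sumn_rcons.
Qed.

Lemma cI_denom_rcons I x : cI_denom (rcons I x) = cI_denom I * qint (sumn I + x).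
Proof. by rewrite /cI_denom partial_sums_rcons -cats1 big_cat big_seq1. Qed.

Lemma qfactS n : qfact n.+1 = qfact n * qint n.+1.
Proof. by rewrite /qfact big_nat_recr. Qed.

Lemma qint_eq0 m : (qint m == 0) = (m == 0)%N.
Proof.
apply/idP/eqP => [/eqP qm0 | ->]; last by rewrite /qint big_ord0.
move/(congr1 (horner^~ 1)): qm0; rewrite horner0 horner_sum.
under eq_bigr => i _ do rewrite hornerXn expr1n.
by rewrite sumr_const card_ord => /eqP; rewrite pnatr_eq0 => /eqP.
Qed.

Lemma cI_denom_neq0 I : all (fun k => 0 < k)%N I -> cI_denom I != 0.
Proof.
elim/last_ind: I => [|I x IH]; first by rewrite /cI_denom big_nil oner_neq0.
rewrite all_rcons => /andP [x_gt0 hI]; rewrite cI_denom_rcons mulf_neq0 ?IH //.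
by rewrite qint_eq0 addn_eq0 (negbTE (lt0n_neq0 x_gt0)) andbF.
Qed.

Lemma SC_gen_mul_denom n I : is_composition n I ->
  SC_gen n I * cI_denom I = 'X^(majI I) * qfact n.
Proof.
elim: n I => [|n IH] I.
  case: I => [_ | x I /andP [/andP [x_gt0 _] /eqP]]; last by rewrite /=; lia.
  by rewrite SC_gen_nil /cI_denom /qfact !big_nil mulr1.
case/lastP: I => [|I x]; first by case/andP.
rewrite /is_composition all_rcons sumn_rcons => /andP [/andP [x_gt0 hpos] /eqP hI].
case: x x_gt0 hI => [|[|k]] // _ hI.
  have {}hI : sumn I = n by lia.
  have IH_I : SC_gen n I * cI_denom I = 'X^(majI I) * qfact n.
    by apply: IH; rewrite /is_composition hpos hI eqxx.
  rewrite SC_gen_rcons1 // cI_denom_rcons -mulrA (mulrA (SC_gen n I)) IH_I.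
  by rewrite majI_rcons sumn_partial_sums hI exprD qfactS addn1; ring.
have {}hI : (sumn I + k.+1 = n)%N by lia.
have IH_Ik : SC_gen n (rcons I k.+1) * cI_denom (rcons I k.+1) =
             'X^(majI (rcons I k.+1)) * qfact n.
  by apply: IH; rewrite /is_composition all_rcons sumn_rcons hpos hI eqxx.
rewrite !cI_denom_rcons !majI_rcons hI in IH_Ik *.
by rewrite SC_gen_rconsS // addnS hI qfactS [RHS]mulrA -IH_Ik; ring.
Qed.

Theorem mainTheorem1 (n : nat) (I : seq nat) :
  (1 <= n)%N -> is_composition n I ->
  \sum_(s : 'S_n | SC_is s I) 'X^('C(n, 2) - inv_perm s) = cI n I.
Proof.
(* The identity holds for n = 0 as well. *)
move=> _ hI; change (SC_gen n I = cI n I).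
rewrite /cI -SC_gen_mul_denom // mulpK //.
by apply: cI_denom_neq0; case/andP: hI.
Qed.
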